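(* Let $\mathcal A=(Q,\Sigma,\delta,\rho)$ be a connected bireversible Mealy automaton whose labeled orbit tree $\mathfrak t(\mathcal A)$ has no active self-liftable branch, and let $\mathfrak j$ be a jungle tree of $\mathfrak t(\mathcal A)$. Then all equivalence classes of the relation $\sim$ on the stems of $\mathfrak j$ have the same cardinality.
   Context: Mealy automata. A Mealy automaton is $\mathcal A=(Q,\Sigma,\delta,\rho)$ with $Q,\Sigma$ finite non-empty sets, $\delta=(\delta_i\colon Q\to Q)_{i\in\Sigma}$, $\rho=(\rho_x\colon\Sigma\to\Sigma)_{x\in Q}$; transitions $x\xrightarrow{i\mid\rho_x(i)}\delta_i(x)$. Invertible: each $\rho_x$ a permutation of $\Sigma$; reversible: each $\delta_i$ a permutation of $Q$; bireversible: invertible, reversible, and for each $j\in\Sigma$ the map $x\mapsto\delta_{\rho_x^{-1}(j)}(x)$ is a permutation of $Q$. Connected: the directed graph on $Q$ with edges $x\to\delta_i(x)$ is connected. Extensions: $\rho_x(i\mathbf s)=\rho_x(i)\rho_{\delta_i(x)}(\mathbf s)$ on $\Sigma^*$; $\rho_{x_1\cdots x_m}=\rho_{x_m}\circ\cdots\circ\rho_{x_1}$; dually $\delta_i(x\mathbf u)=\delta_i(x)\delta_{\rho_x(i)}(\mathbf u)$ on $Q^*$, $\delta_{i_1\cdots i_m}=\delta_{i_m}\circ\cdots\circ\delta_{i_1}$. The connected components of $\mathcal A^n$ (stateset $Q^n$, transitions $\mathbf u\xrightarrow{i\mid\rho_{\mathbf u}(i)}\delta_i(\mathbf u)$) are,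 for reversible $\mathcal A$, the orbits of $Q^n$ under the maps $\delta_{\mathbf s}$. Orbit tree $\mathfrak t(\mathcal A)$: vertices at level $n\ge0$ are the connected components of $\mathcal A^n$; an edge from the component of $\mathbf u\in Q^n$ to that of $\mathbf ux$ for all $\mathbf u,x$; edge $C\to D$ labeled $\#D/\#C$. $\top,\bot$ = first/last vertex of a downward path; level of an edge/path = level of its top vertex. A word of $Q^*\cup Q^\omega$ represents the initial path through the components of its prefixes. Edge $e$ is liftable to $f$ if every word of $\bot(e)$ has a suffix in $\bot(f)$; paths are liftable if corresponding edges are. $f$ is a legitimate child of $e$ if $\top(f)=\bot(e)$ and $f$ is liftable to $e$. A path/subtree $\mathfrak s$ is $k$-self-liftable if for all $i\ge0$ every path in $\mathfrak s$ starting at level $i+k$ is liftable to a path in $\mathfrak s$ starting at level $i$; self-liftable if $k$-self-liftable for some $k>0$. A branch (infinite initial path) is active if its labels are not eventually all $1$. Jungle trees: for a finite 1-self-liftable initial path $\mathbf e$ of length $n$ whose last edge has at least two legitimate children, all labeled $1$, $\mathfrak j(\mathbf e)$ consists of $\mathbf e$ plus all edges descending from $\bot(\mathbf e)$ that are liftable to the last edge of $\mathbf e$. Stems: the words of $\bot(\mathbf e)\subseteq Q^n$. A $\mathfrak j$-word is a word representing an initial path of $\mathfrak j$. For stems $\mathbf u,\mathbf v$: $\mathbf u\sim\mathbf v$ iff there is $\mathbf s\in Q^*$ such that $\mathbf{usv}$ is a $\mathfrak j$-word and $\rho_{\mathbf{us}}$ is the identity of $\Sigma^*$ ($\sim$ is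 an equivalence relation). *)

From HB Require Import structures.
From mathcomp Require Import all_boot all_algebra.
From mathcomp Require Import boolp.
From Stdlib Require Import Relations.

Set Implicit Arguments.
Unset Strict Implicit.
Unset Printing Implicit Defensive.

Section Mealy.
(* A Mealy automaton (Q, Sg, delta, rho):  x --i|rho x i--> delta i x. *)
Variables (Q Sg : finType) (delta : Sg -> Q -> Q) (rho : Q -> Sg -> Sg).

Definition invertible := forall x : Q, bijective (rho x).
Definition reversible := forall i : Sg, bijective (delta i).
(* finv (rho x) is the inverse permutation of rho x when rho x is injective *)
Definition bireversible :=
  [/\ invertible, reversible &
      forall j : Sg, bijective (fun x : Q => delta (finv (rho x) j) x)].
Definition connected_automaton :=
  forall x y : Q, clos_refl_sym_trans Q (fun a b => exists i, b = delta i a) x y.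

Fixpoint rho_st (x : Q) (s : seq Sg) : seq Sg :=
  if s is i :: s' then rho x i :: rho_st (delta i x) s' else [::].
(* rho_{x1...xm} = rho_{xm} o ... o rho_{x1} *)
Fixpoint rho_word (u : seq Q) (s : seq Sg) : seq Sg :=
  if u is x :: u' then rho_word u' (rho_st x s) else s.
Fixpoint delta_st (i : Sg) (u : seq Q) : seq Q :=
  if u is x :: u' then delta i x :: delta_st (rho x i) u' else [::].

(* u and v lie in the same connected component of A^n (n = |u|): equivalence
   closure of the transition graph  u --> delta_i(u)  of A^n. *)
Definition comp (u v : seq Q) : Prop :=
  clos_refl_sym_trans (seq Q) (fun a b => exists i, b = delta_st i a) u v.

Definition cardC (u : seq Q) : nat :=
  #|[set t : (size u).-tuple Q | `[< comp (val t) u >] ]|.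

(* An edge of the orbit tree is represented by any word w (|w| >= 1) of its
   bottom vertex; its top vertex is the component of the prefix of length
   |w|-1, its level is |w|-1.  Two words represent the same edge iff comp. *)
Definition label (w : seq Q) : rat :=
  ((cardC w)%:R / (cardC (take (size w).-1 w))%:R)%R.

Definition liftable_edge (e f : seq Q) : Prop :=
  forall w, comp w e -> comp (drop (size w - size f) w) f.

(* downward paths: lists of consecutive edges *)
Fixpoint is_path (p : seq (seq Q)) : Prop :=
  match p with
  | e1 :: ((e2 :: _) as p') =>
      size e2 = (size e1).+1 /\ comp (take (size e1) e2) e1 /\ is_path p'
  | _ => True
  end.

Definition starts_at (p : seq (seq Q)) (l : nat) : Prop :=
  if p is e :: _ then size e = l.+1 else False.

Fixpoint liftable_path (p p' : seq (seq Q)) : Prop :=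
  match p, p' with
  | [::], [::] => True
  | e :: q, f :: q' => liftable_edge e f /\ liftable_path q q'
  | _, _ => False
  end.

(* a subtree / path is given by its set of edges (a comp-closed predicate) *)
Definition all_in (s : seq Q -> Prop) (p : seq (seq Q)) : Prop :=
  forall e, e \in p -> s e.

Definition k_self_liftable (k : nat) (s : seq Q -> Prop) : Prop :=
  forall (i : nat) (p : seq (seq Q)),
    is_path p -> all_in s p -> starts_at p (i + k) ->
    exists p', [/\ is_path p', all_in s p', starts_at p' i & liftable_path p p'].

Definition self_liftable (s : seq Q -> Prop) : Prop :=
  exists k, 0 < k /\ k_self_liftable k s.

(* branches: infinite initial paths, as sequences of vertices b n at level n *)
Definition is_branch (b : nat -> seq Q) : Prop :=
  forall n, size (b n) = n /\ comp (take n (b n.+1)) (b n).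
Definition in_branch (b : nat -> seq Q) (e : seq Q) : Prop :=
  exists n, comp e (b n.+1).
Definition active (b : nat -> seq Q) : Prop :=
  forall N, exists n, N <= n /\ label (b n.+1) <> 1%R.

(* finite initial path represented by a word z (edges = prefixes of z) *)
Definition in_ipath (z : seq Q) (e : seq Q) : Prop :=
  exists m, 0 < m <= size z /\ comp e (take m z).

(* the last edge of the initial path of z is z itself *)
Definition child (e f : seq Q) : Prop :=
  size f = (size e).+1 /\ comp (take (size e) f) e.
Definition legit_child (e f : seq Q) : Prop := child e f /\ liftable_edge f e.

Definition jungle_base (z : seq Q) : Prop :=
  [/\ 0 < size z,
      k_self_liftable 1 (in_ipath z),
      (exists f1 f2, [/\ legit_child z f1, legit_child z f2 & ~ comp f1 f2]) &
      (forall f, legit_child z f -> label f = 1%R)].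

Definition in_jungle (z : seq Q) (f : seq Q) : Prop :=
  in_ipath z f \/
  [/\ size z < size f, comp (take (size z) f) z & liftable_edge f z].

Definition jword (z w : seq Q) : Prop :=
  forall m, 0 < m <= size w -> in_jungle z (take m w).

Definition stem (z u : seq Q) : Prop := comp u z.

Definition jsim (z u v : seq Q) : Prop :=
  exists s : seq Q, jword z (u ++ s ++ v) /\
    forall t : seq Sg, rho_word (u ++ s) t = t.

Definition jclass (z u : seq Q) : {set (size z).-tuple Q} :=
  [set t : (size z).-tuple Q | `[< stem z (val t) /\ jsim z (val t) u >] ].

End Mealy.

(* For a letter i, delta_i maps the stem u, a connecting word s with rho_{us}
   trivial, and the stem v to delta_i(u), delta_i(s), delta_i(v): since
   rho_{us} fixes i, the letter entering v is again i.  As delta_i maps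
   components of the orbit tree onto themselves, jungle words go to jungle
   words, so delta_i injects the class of u into the class of delta_i(u).
   Since delta_i permutes the finite set Q^n, the class sizes are constant on
   the orbits of the maps delta_i, i.e. on the component of the stems. *)
From Pilot Require Import Defs.
From HB Require Import structures.
From mathcomp Require Import all_boot all_algebra.
From mathcomp Require Import boolp.
From Stdlib Require Import Relations.

Lemma inj_leq_invariant (T : finType) (f : T -> T) (g : T -> nat) :
  injective f -> (forall x, g x <= g (f x)) -> forall x, g (f x) = g x.
Proof.
move=> injf g_incr x; apply/eqP; rewrite eqn_leq g_incr andbT.
have g_iter k y : g y <= g (iter k f y).
  by elim: k => [|k IHk] //=; apply: leq_trans IHk (g_incr _).
by have := g_iter (fingraph.order f (f x)).-1 (f x); rewrite -/(@finv T f (f x)) finv_f.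
Qed.

Section Mealy.
Variables (Q Sg : finType) (delta : Sg -> Q -> Q) (rho : Q -> Sg -> Sg).

Local Notation delta_st := (delta_st delta rho).
Local Notation rho_word := (rho_word delta rho).
Local Notation comp := (Defs.comp delta rho).
Local Notation in_jungle := (in_jungle delta rho).
Local Notation jword := (jword delta rho).
Local Notation jsim := (jsim delta rho).
Local Notation jclass := (jclass delta rho).

Definition rho_letter (i : Sg) (u : seq Q) : Sg := foldl (fun i x => rho x i) i u.

Lemma rho_letter_cat i u w : rho_letter (rho_letter i u) w = rho_letter i (u ++ w).
Proof. by rewrite /rho_letter foldl_cat. Qed.

Lemma rho_word_cons u i t :
  rho_word u (i :: t) = rho_letter i u :: rho_word (delta_st i u) t.
Proof. by elim: u i t => [|x u IHu] i t //=; rewrite IHu. Qed.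

Lemma size_delta_st i u : size (delta_st i u) = size u.
Proof. by elim: u i => [|x u IHu] i //=; rewrite IHu. Qed.

Lemma delta_st_cat i u w :
  delta_st i (u ++ w) = delta_st i u ++ delta_st (rho_letter i u) w.
Proof. by elim: u i => [|x u IHu] i //=; rewrite IHu. Qed.

Lemma take_delta_st i m u : take m (delta_st i u) = delta_st i (take m u).
Proof. by elim: u i m => [|x u IHu] i [|m] //=; rewrite IHu. Qed.

Lemma comp_delta_st i u : comp u (delta_st i u).
Proof. by apply: rst_step; exists i. Qed.

Lemma comp_size {u v} : comp u v -> size u = size v.
Proof.
elim=> [x _ [i ->]|//|x y _ //|x y w _ -> _ //].
by rewrite size_delta_st.
Qed.

Lemma comp_take m {u v} : comp u v -> comp (take m u) (take m v).
Proof.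
elim=> [x _ [i ->]|x|x y _|x y w _ Hxy _ Hyw].
- by rewrite take_delta_st; apply: comp_delta_st.
- exact: rst_refl.
- exact: rst_sym.
- exact: rst_trans Hxy Hyw.
Qed.

Lemma in_jungle_comp z f g :
  in_jungle z f -> comp g f -> in_jungle z g.
Proof.
move=> [[m [Hm Hfm]]|[Hsize Htake Hlift]] Hgf.
- by left; exists m; split=> //; apply: rst_trans Hgf Hfm.
- right; split; first by rewrite (comp_size Hgf).
  + exact: rst_trans (comp_take (size z) Hgf) Htake.
  + by move=> w Hwg; apply: Hlift; apply: rst_trans Hwg Hgf.
Qed.

Lemma jword_delta_st z i w : jword z w -> jword z (delta_st i w).
Proof.
move=> Hw m; rewrite size_delta_st take_delta_st => Hm.
by apply: in_jungle_comp (Hw m Hm) _; apply: rst_sym; apply: comp_delta_st.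
Qed.

Lemma jsim_delta_st z i u v : jsim z u v ->
  jsim z (delta_st i u) (delta_st i v).
Proof.
case=> s [Hj Hid].
have Hi : rho_letter i (u ++ s) = i by have := Hid [:: i]; rewrite rho_word_cons => -[].
exists (delta_st (rho_letter i u) s); split.
- have -> : delta_st i u ++ delta_st (rho_letter i u) s ++ delta_st i v
            = delta_st i (u ++ s ++ v) by rewrite !delta_st_cat rho_letter_cat Hi.
  exact: jword_delta_st.
- by move=> t; rewrite -delta_st_cat; have := Hid (i :: t); rewrite rho_word_cons => -[].
Qed.

Hypothesis rev : reversible delta.

Lemma delta_st_inj i u v : size u = size v -> delta_st i u = delta_st i v -> u = v.
Proof.
elim: u v i => [|x u IHu] [|y v] i //= [Hsize] [Hxy Huv].
have exy : x = y by apply: (bij_inj (rev i)).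
by subst y; rewrite (IHu v _ Hsize Huv).
Qed.

Lemma delta_st_tupleP {n} (i : Sg) (t : n.-tuple Q) : size (delta_st i t) == n.
Proof. by rewrite size_delta_st size_tuple. Qed.

Definition delta_tuple n (i : Sg) (t : n.-tuple Q) : n.-tuple Q := Tuple (delta_st_tupleP i t).

Lemma delta_tuple_inj n i : injective (@delta_tuple n i).
Proof.
move=> t t' /(congr1 val) /delta_st_inj Htt'.
by apply: val_inj; apply: Htt'; rewrite !size_tuple.
Qed.

Lemma card_jclass_delta_st_leq z i u :
  #|jclass z u| <= #|jclass z (delta_st i u)|.
Proof.
rewrite -(card_imset _ (@delta_tuple_inj _ i)); apply: subset_leq_card.
apply/subsetP => y /imsetP [t]; rewrite !inE => /asboolP [Ht Htu] ->.
apply/asboolP; split; last exact: jsim_delta_st.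
by apply: rst_trans Ht; apply: rst_sym; apply: comp_delta_st.
Qed.

Lemma card_jclass_delta_st z i u : #|jclass z (delta_st i u)| = #|jclass z u|.
Proof.
exact: (@inj_leq_invariant _ (@delta_tuple (size u) i) (fun t => #|jclass z t|)
  (@delta_tuple_inj _ i) (fun t => card_jclass_delta_st_leq z i t) (in_tuple u)).
Qed.

Lemma card_jclass_comp z u v : comp u v -> #|jclass z u| = #|jclass z v|.
Proof.
elim=> [x _ [i ->]|//|x y _ //|x y w _ -> _ //].
by rewrite card_jclass_delta_st.
Qed.

End Mealy.

Theorem proposition5p11 (Q Sg : finType) (delta : Sg -> Q -> Q) (rho : Q -> Sg -> Sg) :
  0 < #|Q| -> 0 < #|Sg| ->
  connected_automaton delta ->
  bireversible delta rho ->
  (forall b : nat -> seq Q, is_branch delta rho b ->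
     ~ (active delta rho b /\ self_liftable delta rho (in_branch delta rho b))) ->
  forall z : seq Q, jungle_base delta rho z ->
  forall u v : seq Q, stem delta rho z u -> stem delta rho z v ->
    #|jclass delta rho z u| = #|jclass delta rho z v|.
Proof.
move=> _ _ _ [_ rev _] _ z _ u v Hu Hv.
by apply: card_jclass_comp rev _ _ _ _; apply: rst_trans Hu (rst_sym _ _ _ _ Hv).
Qed.
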